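(* There is a constant $0<C<\infty$ such that for all $0<r\le1$ and all $u,v\in\mathbb{C}$, \[\big|\eta_u(B(0,r))-\eta_v(B(0,r))\big|\le C|u-v|^{1/2},\] where $B(0,r)$ is the closed Korányi ball in $\mathbb{H}$ of radius $r$ centered at the identity $0$.
   Context: $\mathbb{H}=\mathbb{C}\times\mathbb{R}$ with group law $(u,s)\cdot(v,t)=(u+v,s+t+\mathrm{Im}(\bar u v))$ and Korányi metric $d(p,q)=\|q^{-1}\cdot p\|$, $\|(u,s)\|=(|u|^4+4s^2)^{1/4}$. For $u\in\mathbb{C}$, $\pi^{-1}(u)=\{u\}\times\mathbb{R}$ is the vertical line over $u$, and $\eta_u$ is the $2$-dimensional Hausdorff measure (with respect to the Korányi metric) restricted to $\pi^{-1}(u)$. *)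

From HB Require Import structures.
From mathcomp Require Import all_boot all_order all_algebra.
From mathcomp Require Import all_classical all_reals all_analysis.
Set Implicit Arguments. Unset Strict Implicit. Unset Printing Implicit Defensive.
Import Order.TTheory GRing.Theory Num.Theory.
Local Open Scope classical_set_scope.
Local Open Scope ring_scope.

(* A point of C = R^2 is a pair (a, b) meaning a + i b. *)
Definition cpt (R : realType) := (R * R)%type.
Definition heis (R : realType) := (cpt R * R)%type.

Definition cabs (R : realType) (u : cpt R) : R := Num.sqrt (u.1 ^+ 2 + u.2 ^+ 2).

Definition im_conj_mul (R : realType) (u v : cpt R) : R := u.1 * v.2 - u.2 * v.1.

(* group law (u,s).(v,t) = (u+v, s+t+Im(conj u v)) *)
Definition hmul (R : realType) (p q : heis R) : heis R :=
  ((p.1.1 + q.1.1, p.1.2 + q.1.2), p.2 + q.2 + im_conj_mul p.1 q.1).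

Definition hinv (R : realType) (p : heis R) : heis R := ((- p.1.1, - p.1.2), - p.2).

Definition kor_norm (R : realType) (p : heis R) : R :=
  Num.sqrt (Num.sqrt ((p.1.1 ^+ 2 + p.1.2 ^+ 2) ^+ 2 + 4 * p.2 ^+ 2)).

Definition kor_dist (R : realType) (p q : heis R) : R := kor_norm (hmul (hinv q) p).

Definition heis0 (R : realType) : heis R := ((0, 0), 0).

Definition kor_ball (R : realType) (x : heis R) (r : R) : set (heis R) :=
  [set p | kor_dist p x <= r].

Definition vline (R : realType) (u : cpt R) : set (heis R) := [set p | p.1 = u].

(* diameter w.r.t. the Koranyi metric (diam of the empty set is 0) *)
Definition kor_diam (R : realType) (E : set (heis R)) : \bar R :=
  ereal_sup ([set 0%E] `|` [set (kor_dist p q)%:E | p in E & q in E]).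

Definition hausdorff2_delta (R : realType) (delta : R) (A : set (heis R)) : \bar R :=
  ereal_inf [set (\sum_(0 <= i <oo) (kor_diam (F i) * kor_diam (F i)))%E
            | F in [set F : nat -> set (heis R) |
                     A `<=` \bigcup_i F i /\ forall i, (kor_diam (F i) <= delta%:E)%E]].

(* 2-dimensional Hausdorff measure: lim_{delta -> 0+} = sup_{delta > 0} *)
Definition hausdorff2 (R : realType) (A : set (heis R)) : \bar R :=
  ereal_sup [set hausdorff2_delta delta A | delta in [set d : R | 0 < d]].

Definition eta_u (R : realType) (u : cpt R) (A : set (heis R)) : \bar R :=
  hausdorff2 (vline u `&` A).

From Pilot Require Import Defs.
From HB Require Import structures.
From mathcomp Require Import all_boot all_order all_algebra.
From mathcomp Require Import all_classical all_reals all_analysis.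
From mathcomp Require Import complex ring lra.

(* On a vertical line the Koranyi distance is [sqrt (2 |s - t|)], so a set of
   diameter [d] meets a line in a set of heights of spread at most [d^2 / 2]:
   on a vertical line [H^2] is twice the Lebesgue measure of the heights. The
   line over [u] meets [B(0, r)] in the heights [t] with [|u|^4 + 4 t^2 <= r^4],
   hence [eta_u(B(0, r)) = 2 sqrt (r^4 - min(|u|, r)^4)]. The Holder bound then
   follows from [|sqrt x - sqrt y| <= sqrt |x - y|] and [|a^4 - b^4| <= 4 |a - b|]
   on [0, 1], with [C = 4]. *)

Set Implicit Arguments.
Unset Strict Implicit.
Unset Printing Implicit Defensive.

Import Order.TTheory GRing.Theory Num.Theory.
Local Open Scope classical_set_scope.
Local Open Scope ring_scope.

Section RealInequalities.
Variable R : rcfType.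
Implicit Types a b c x y : R.

Lemma sqrtr_le x y : 0 <= y -> (Num.sqrt x <= y) = (x <= y ^+ 2).
Proof. by move=> y0; rewrite -{1}(ger0_norm y0) -sqrtr_sqr ler_sqrt ?sqr_ge0. Qed.

Lemma sqrtr_ge x y : 0 <= x -> 0 <= y ->
  (y <= Num.sqrt x) = (y ^+ 2 <= x).
Proof. by move=> x0 y0; rewrite -{1}(ger0_norm y0) -sqrtr_sqr ler_sqrt. Qed.

Lemma sqrtr_dist_le x y : 0 <= x -> 0 <= y ->
  `|Num.sqrt x - Num.sqrt y| <= Num.sqrt `|x - y|.
Proof.
move=> x0 y0; rewrite -[leLHS]sqrtr_sqr ler_sqrt //.
rewrite -[X in `|X - _|](sqr_sqrtr x0) -[X in `|_ - X|](sqr_sqrtr y0).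
rewrite subr_sqr normrM -[leLHS]real_normK ?num_real // expr2 ler_wpM2l //.
have sx := sqrtr_ge0 x; have sy := sqrtr_ge0 y.
by rewrite (ger0_norm (addr_ge0 sx sy)) ler_norml; apply/andP; split; lra.
Qed.

Lemma dist_exprn_le a b n : 0 <= a <= 1 -> 0 <= b <= 1 ->
  `|a ^+ n - b ^+ n| <= n%:R * `|a - b|.
Proof.
move=> /andP[a0 a1] /andP[b0 b1].
rewrite subrXX normrM mulrC ler_wpM2r //.
apply: le_trans (ler_norm_sum _ _ _) _.
have -> : n%:R = \sum_(i < n) (1 : R) by rewrite sumr_const card_ord.
apply: ler_sum => i _.
by rewrite normrM !ger0_norm ?exprn_ge0 // mulr_ile1 ?exprn_ge0 ?exprn_ile1.
Qed.

Lemma dist_minr a b c : `|Num.min a c - Num.min b c| <= `|a - b|.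
Proof.
have := ler_norm (a - b); have := ler_norm (b - a); rewrite distrC.
by case: (lerP a c) (lerP b c) => ha [] hb; rewrite ler_norml; lra.
Qed.

Lemma dist_sqrt_sub_exp4_le r a b : 0 <= a <= r -> 0 <= b <= r -> r <= 1 ->
  `|2 * Num.sqrt (r ^+ 4 - a ^+ 4) - 2 * Num.sqrt (r ^+ 4 - b ^+ 4)|
    <= 4 * Num.sqrt `|a - b|.
Proof.
move=> /andP[a0 ar] /andP[b0 br] r1.
have a4 : 0 <= r ^+ 4 - a ^+ 4 by rewrite subr_ge0 lerXn2r ?nnegrE ?(le_trans a0).
have b4 : 0 <= r ^+ 4 - b ^+ 4 by rewrite subr_ge0 lerXn2r ?nnegrE ?(le_trans b0).
rewrite -mulrBr normrM ger0_norm //.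
apply: le_trans (ler_wpM2l _ (sqrtr_dist_le a4 b4)) _ => //.
have -> : r ^+ 4 - a ^+ 4 - (r ^+ 4 - b ^+ 4) = b ^+ 4 - a ^+ 4 by ring.
have : Num.sqrt `|b ^+ 4 - a ^+ 4| <= 2 * Num.sqrt `|a - b|.
  rewrite sqrtr_le ?mulr_ge0 ?sqrtr_ge0 // exprMn sqr_sqrtr // distrC.
  have a1 : 0 <= a <= 1 by rewrite a0 (le_trans ar r1).
  have b1 : 0 <= b <= 1 by rewrite b0 (le_trans br r1).
  by rewrite -natrX; apply: dist_exprn_le.
lra.
Qed.

End RealInequalities.

Section Koranyi.
Variable R : realType.
Implicit Types (u v : cpt R) (p q : heis R) (r h : R).

Lemma cabs_ge0 u : 0 <= cabs u.
Proof. exact: sqrtr_ge0. Qed.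

Lemma cabsE u : ((cabs u)%:C)%C = `|(u.1 +i* u.2)%C|.
Proof. by rewrite normc_def. Qed.

Lemma sqr_cabs u : cabs u ^+ 2 = u.1 ^+ 2 + u.2 ^+ 2.
Proof. by rewrite sqr_sqrtr // addr_ge0 ?sqr_ge0. Qed.

Lemma cabs_dist u v : `|cabs u - cabs v| <= cabs (u.1 - v.1, u.2 - v.2).
Proof.
rewrite -lecR cabsE /=.
have -> : ((u.1 - v.1) +i* (u.2 - v.2))%C = (u.1 +i* u.2)%C - (v.1 +i* v.2)%C by [].
apply: le_trans (ler_dist_dist _ _).
by rewrite -!cabsE -rmorphB normc_def /= expr0n addr0 sqrtr_sqr.
Qed.

Lemma kor_dist_vertical p q : p.1 = q.1 -> kor_dist p q = Num.sqrt (2 * `|p.2 - q.2|).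
Proof.
case: p q => [[a b] s] [[c e] t] /= [<- <-].
rewrite /kor_dist /kor_norm /hmul /hinv /im_conj_mul /=.
have -> : ((- a + a) ^+ 2 + (- b + b) ^+ 2) ^+ 2 + 4 * (- t + s + (- a * b - - b * a)) ^+ 2
   = (2 * `|s - t|) ^+ 2 by rewrite exprMn real_normK ?num_real //; ring.
by rewrite sqrtr_sqr ger0_norm // mulr_ge0.
Qed.

Lemma kor_ball0E r p : 0 <= r ->
  kor_ball (heis0 R) r p <-> cabs p.1 ^+ 4 + 4 * p.2 ^+ 2 <= r ^+ 4.
Proof.
move=> r0; rewrite /kor_ball /kor_dist /kor_norm /hmul /hinv /im_conj_mul /heis0 /=.
have -> : ((- 0 + p.1.1) ^+ 2 + (- 0 + p.1.2) ^+ 2) ^+ 2 + 4 * (- 0 + p.2 + (- 0 * p.1.2 - - 0 * p.1.1)) ^+ 2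
  = (cabs p.1 ^+ 2) ^+ 2 + 4 * p.2 ^+ 2 by rewrite sqr_cabs; ring.
by rewrite !sqrtr_le ?sqr_ge0 // -!exprM.
Qed.

Lemma kor_diam_ge0 (E : set (heis R)) : (0 <= kor_diam E)%E.
Proof. by apply: ereal_sup_ubound; left. Qed.

Lemma kor_dist_le_diam (E : set (heis R)) p q : E p -> E q ->
  ((kor_dist p q)%:E <= kor_diam E)%E.
Proof. by move=> Ep Eq; apply: ereal_sup_ubound; right; exists p => //; exists q. Qed.

Lemma kor_diam_le (E : set (heis R)) x : 0 <= x ->
  (forall p q, E p -> E q -> kor_dist p q <= x) -> (kor_diam E <= x%:E)%E.
Proof.
move=> x0 Ex; apply: ge_ereal_sup => _ [->|[p Ep [q Eq <-]]]; rewrite lee_fin //.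
exact: Ex.
Qed.

Lemma kor_diam_set0 : kor_diam (@set0 (heis R)) = 0%E.
Proof.
by apply/eqP; rewrite eq_le kor_diam_ge0 andbT; apply: kor_diam_le => // p q [].
Qed.

Lemma hausdorff2_delta_le_cover d (A : set (heis R)) (F : nat -> set (heis R)) :
  A `<=` \bigcup_i F i -> (forall i, (kor_diam (F i) <= d%:E)%E) ->
  (hausdorff2_delta d A <= \sum_(0 <= i <oo) (kor_diam (F i) * kor_diam (F i)))%E.
Proof. by move=> AF Fd; apply: ereal_inf_lbound; exists F. Qed.

Lemma hausdorff2_delta_le_finite_cover d (A : set (heis R)) (F : nat -> set (heis R)) k :
  0 <= d -> A `<=` \bigcup_(i in [set i | (i < k)%N]) F i ->
  (forall i, (kor_diam (F i) <= d%:E)%E) ->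
  (hausdorff2_delta d A <= \sum_(0 <= i < k) (kor_diam (F i) * kor_diam (F i)))%E.
Proof.
move=> d0 AF Fd; pose G i := if (i < k)%N then F i else set0.
have diamG i : kor_diam (G i) = if (i < k)%N then kor_diam (F i) else 0%E.
  by rewrite /G; case: ifP; rewrite ?kor_diam_set0.
apply: le_trans (@hausdorff2_delta_le_cover d A G _ _) _.
- by move=> p /AF [i ik Fp]; exists i; rewrite //= /G ik.
- by move=> i; rewrite diamG; case: ifP.
rewrite (nneseries_split 0 k) => [|i _]; last by rewrite mule_ge0 ?kor_diam_ge0.
rewrite eseries0 => [|i ki _]; last by rewrite diamG ltnNge ki mule0.
rewrite adde0 add0n.
by under eq_big_nat => i /andP[_ ik] do rewrite diamG ik.
Qed.

Lemma hausdorff2_delta_le_hausdorff2 d (A : set (heis R)) : 0 < d ->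
  (hausdorff2_delta d A <= hausdorff2 A)%E.
Proof. by move=> d0; apply: ereal_sup_ubound; exists d. Qed.

Lemma hausdorff2_ge0 (A : set (heis R)) : (0 <= hausdorff2 A)%E.
Proof.
apply: le_trans (hausdorff2_delta_le_hausdorff2 A ltr01).
apply: le_ereal_inf_tmp => _ [F _ <-].
by apply: nneseries_ge0 => i _ _; rewrite mule_ge0 ?kor_diam_ge0.
Qed.

Lemma hausdorff2_set0 : hausdorff2 (@set0 (heis R)) = 0%E.
Proof.
apply/eqP; rewrite eq_le hausdorff2_ge0 andbT.
apply: ge_ereal_sup => _ [d d0 <-].
apply: le_trans (@hausdorff2_delta_le_cover d set0 (fun=> set0) (sub0set _) _) _.
  by move=> _; rewrite kor_diam_set0 lee_fin (ltW d0).
by rewrite kor_diam_set0 mule0 eseries0.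
Qed.

Definition vseg u h : set (heis R) := [set p | p.1 = u /\ `|p.2| <= h].

Definition vcell u (a b : R) : set (heis R) := [set p | p.1 = u /\ a <= p.2 <= b].

Lemma kor_diam_vcell u (a b : R) : a <= b ->
  (kor_diam (vcell u a b) <= (Num.sqrt (2 * (b - a)))%:E)%E.
Proof.
move=> ab; apply: kor_diam_le (sqrtr_ge0 _) _ => p q [pu /andP[p1 p2]] [qu /andP[q1 q2]].
rewrite kor_dist_vertical ?pu ?qu // ler_sqrt ?mulr_ge0 ?subr_ge0 // ler_pM2l //.
by rewrite ler_norml; apply/andP; split; lra.
Qed.

Lemma itv_cover_cells (a w t : R) n : 0 <= w -> a <= t <= a + n.+1%:R * w ->
  exists2 i, (i <= n)%N & a + i%:R * w <= t <= a + i.+1%:R * w.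
Proof.
move=> w0 /andP[at_]; elim: n => [|n IH] tle.
  by exists 0%N; rewrite // mul0r addr0 at_.
have [tn|tn] := leP t (a + n.+1%:R * w).
  by have [i ni cell] := IH tn; exists i => //; apply: leqW.
by exists n.+1; rewrite // (ltW tn).
Qed.

Lemma vseg_sub_vcells u h k : (0 < k)%N -> 0 <= h ->
  vseg u h `<=` \bigcup_(i in [set i | (i < k)%N])
    vcell u (- h + i%:R * (2 * h / k%:R)) (- h + i.+1%:R * (2 * h / k%:R)).
Proof.
case: k => // k _ h0 p [pu]; rewrite ler_norml => /andP[hp ph].
have w0 : 0 <= 2 * h / k.+1%:R by rewrite divr_ge0 ?mulr_ge0.
have [|i ik cell] := @itv_cover_cells (- h) _ p.2 k w0.
  by rewrite hp /= mulrC divfK ?pnatr_eq0 //; lra.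
by exists i.
Qed.

Lemma hausdorff2_delta_vseg_le u h d : 0 < d -> 0 <= h ->
  (hausdorff2_delta d (vseg u h) <= (4 * h)%:E)%E.
Proof.
move=> d0 h0; pose k := (Num.truncn (4 * h / d ^+ 2)).+1.
have k0 : 0 < k%:R :> R by rewrite ltr0n.
pose w := 2 * h / k%:R.
have w0 : 0 <= w by rewrite /w divr_ge0 ?mulr_ge0 // ler0n.
have kw : k%:R * w = 2 * h by rewrite /w mulrC divfK ?gt_eqF.
have wd : Num.sqrt (2 * w) <= d.
  rewrite sqrtr_le; last exact: ltW.
  have : 4 * h / d ^+ 2 < k%:R by apply: truncnS_gt.
  by rewrite ltr_pdivrMr ?exprn_gt0 // /w mulrA ler_pdivrMr //; lra.
have diam_cell i : (kor_diam (vcell u (- h + i%:R * w) (- h + i.+1%:R * w))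
    <= (Num.sqrt (2 * w))%:E)%E.
  have cell_len : (- h + i.+1%:R * w) - (- h + i%:R * w) = w by rewrite -natr1; ring.
  by rewrite -[X in Num.sqrt (2 * X)]cell_len; apply: kor_diam_vcell; rewrite lerD2l ler_wpM2r ?ler_nat.
apply: le_trans (@hausdorff2_delta_le_finite_cover _ _ _ k (ltW d0) _ _) _.
- exact: vseg_sub_vcells.
- by move=> i; apply: le_trans (diam_cell i) _; rewrite lee_fin.
apply: (@le_trans _ _ (\sum_(0 <= i < k) (2 * w)%:E)%E).
  apply: lee_sum => i _; have D0 := kor_diam_ge0 (vcell u (- h + i%:R * w) (- h + i.+1%:R * w)).
  apply: le_trans (lee_pmul D0 D0 (diam_cell i) (diam_cell i)) _.
  by rewrite -EFinM -expr2 sqr_sqrtr ?mulr_ge0.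
by rewrite sumEFin sumr_const_nat subn0 lee_fin -mulrnAr -[w *+ k]mulr_natl kw; lra.
Qed.

Lemma vertical_spread_le (E : set (heis R)) u d t t' : kor_diam E = d%:E ->
  E (u, t) -> E (u, t') -> 2 * `|t - t'| <= d ^+ 2.
Proof.
move=> Ed Et Et'; have d0 : 0 <= d by rewrite -lee_fin -Ed kor_diam_ge0.
by have := kor_dist_le_diam Et Et'; rewrite Ed lee_fin kor_dist_vertical // sqrtr_le.
Qed.

Lemma vslice_sub_itv (E : set (heis R)) u d : kor_diam E = d%:E ->
  let P := [set t | E (u, t)] in P `<=` [set` `[inf P, inf P + d ^+ 2 / 2]].
Proof.
move=> Ed P t Pt.
have lbP : lbound P (t - d ^+ 2 / 2).
  move=> t' Pt'; have := vertical_spread_le Ed Pt Pt'.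
  by have := ler_norm (t - t'); lra.
have infP_le : inf P <= t by apply: ge_inf => //; exists (t - d ^+ 2 / 2).
have infP_ge : t - d ^+ 2 / 2 <= inf P by apply: lb_le_inf => //; exists t.
by rewrite /= in_itv /= infP_le /=; lra.
Qed.

Lemma lebesgue_measure_itv_cc_le (a x : R) : 0 <= x ->
  (lebesgue_measure [set` `[a, (a + x)%R]] <= x%:E)%E.
Proof.
move=> x0; rewrite lebesgue_measure_itv /=; case: ifP => _; last by rewrite lee_fin.
by rewrite -EFinD lee_fin addrAC subrr add0r.
Qed.

Lemma vseg_le_sum_diam2 u h (F : nat -> set (heis R)) : 0 <= h ->
  vseg u h `<=` \bigcup_i F i ->
  ((4 * h)%:E <= \sum_(0 <= i <oo) (kor_diam (F i) * kor_diam (F i)))%E.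
Proof.
move=> h0 cover; have D2_ge0 i : (0 <= kor_diam (F i) * kor_diam (F i))%E.
  by rewrite mule_ge0 ?kor_diam_ge0.
have [[i Di]|finD] := pselect (exists i, kor_diam (F i) = +oo%E).
  by rewrite (@nneseries_pinfty _ _ _ i) ?leey // Di mulyy.
pose d i := fine (kor_diam (F i)).
have Fd i : kor_diam (F i) = (d i)%:E.
  rewrite fineK // ge0_fin_numE ?kor_diam_ge0 // ltey; apply/eqP => Di.
  by apply: finD; exists i.
pose P i := [set t | F i (u, t)].
pose I i : set R := [set` `[inf (P i), inf (P i) + d i ^+ 2 / 2]].
pose J : set R := [set` `[- h, h]].
have cover_itv : J `<=` \bigcup_i I i.
  move=> t; rewrite /J /= in_itv /= => ht.
  have [|i _ Fit] := cover (u, t); first by split => //=; rewrite ler_norml.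
  by exists i => //; apply: (vslice_sub_itv (Fd i)).
have len_itv : ((2 * h)%:E <= lebesgue_measure J)%E.
  rewrite /J lebesgue_measure_itv /= lte_fin; case: ltP => hh.
    by rewrite -EFinD lee_fin; lra.
  by rewrite lee_fin; lra.
have len_I i : (lebesgue_measure (I i) <= 2^-1%:E * (kor_diam (F i) * kor_diam (F i)))%E.
  apply: le_trans (lebesgue_measure_itv_cc_le _ _) _.
    by rewrite divr_ge0 ?sqr_ge0.
  by rewrite Fd -!EFinM lee_fin expr2 mulrC.
have subadd := measure_sigma_subadditive lebesgue_measure (fun i => measurable_itv _)
  (measurable_itv _) cover_itv.
have half : ((2 * h)%:E <=
    2^-1%:E * \sum_(0 <= i <oo) (kor_diam (F i) * kor_diam (F i)))%E.
  rewrite -nneseriesZl //.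
  apply: le_trans len_itv (le_trans subadd _).
  by apply: lee_nneseries => [n _ _|n _]; [exact: measure_ge0 | exact: len_I].
rewrite -(@lee_pmul2l _ 2%:E) // muleA -!EFinM mulfV ?pnatr_eq0 // mul1e in half.
by rewrite (_ : 4 * h = 2 * (2 * h)) //; ring.
Qed.

Lemma hausdorff2_vseg u h : 0 <= h -> hausdorff2 (vseg u h) = (4 * h)%:E.
Proof.
move=> h0; apply/eqP; rewrite eq_le; apply/andP; split.
  by apply: ge_ereal_sup => _ [d d0 <-]; exact: hausdorff2_delta_vseg_le.
apply: le_trans (hausdorff2_delta_le_hausdorff2 _ ltr01).
by apply: le_ereal_inf_tmp => _ [F [cover _] <-]; exact: (vseg_le_sum_diam2 h0 cover).
Qed.

(* Plain [vline] would denote the linear span of mathcomp's vector.v. *)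
Lemma vline_ball0 u r : 0 <= r -> cabs u <= r ->
  Defs.vline u `&` kor_ball (heis0 R) r = vseg u (Num.sqrt (r ^+ 4 - cabs u ^+ 4) / 2).
Proof.
move=> r0 ur; have M0 : 0 <= r ^+ 4 - cabs u ^+ 4.
  by rewrite subr_ge0 lerXn2r ?nnegrE ?cabs_ge0.
have slice t : (`|t| <= Num.sqrt (r ^+ 4 - cabs u ^+ 4) / 2) =
    (cabs u ^+ 4 + 4 * t ^+ 2 <= r ^+ 4).
  rewrite ler_pdivlMr // sqrtr_ge ?mulr_ge0 // exprMn real_normK ?num_real //.
  by apply/idP/idP; lra.
apply/seteqP; split => p [pu].
  by rewrite kor_ball0E // pu -slice.
by rewrite /Defs.vline /= kor_ball0E // pu slice.
Qed.

Lemma vline_ball0_empty u r : 0 <= r < cabs u ->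
  Defs.vline u `&` kor_ball (heis0 R) r = set0.
Proof.
move=> /andP[r0 ru]; apply/seteqP; split => // p [pu]; rewrite kor_ball0E // pu.
have : r ^+ 4 < cabs u ^+ 4 by rewrite ltrXn2r ?nnegrE ?cabs_ge0.
by have := sqr_ge0 p.2; lra.
Qed.

Lemma eta_ball0 u r : 0 <= r ->
  eta_u u (kor_ball (heis0 R) r) = (2 * Num.sqrt (r ^+ 4 - Num.min (cabs u) r ^+ 4))%:E.
Proof.
move=> r0; rewrite /eta_u; have [ur|ru] := leP (cabs u) r.
  rewrite vline_ball0 // hausdorff2_vseg ?divr_ge0 ?sqrtr_ge0 //.
  by congr (_%:E); field.
by rewrite vline_ball0_empty ?r0 // hausdorff2_set0 subrr sqrtr0 mulr0.
Qed.

End Koranyi.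

Theorem lemma4p5 (R : realType) :
  exists C : R, 0 < C /\
    forall (r : R), 0 < r -> r <= 1 ->
    forall (u v : cpt R),
      (`| eta_u u (kor_ball (heis0 R) r) - eta_u v (kor_ball (heis0 R) r) |
         <= (C * Num.sqrt (cabs (u.1 - v.1, u.2 - v.2)))%:E)%E.
Proof.
exists 4; split => // r r0 r1 u v.
have clamp w : 0 <= Num.min (cabs w) r <= r.
  by rewrite le_min cabs_ge0 ge_min lexx orbT (ltW r0).
rewrite !eta_ball0 ?(ltW r0) // -EFinB abse_EFin lee_fin.
apply: le_trans (dist_sqrt_sub_exp4_le (clamp u) (clamp v) r1) _.
rewrite ler_pM2l // ler_sqrt ?cabs_ge0 //.
exact: le_trans (dist_minr _ _ _) (cabs_dist u v).
Qed.
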